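(* Consider a ROS~2 application executed on a single processor by the events executor with the two-queue mechanism described in the context, under the standing assumptions of the context (including LIFO-ordered delivery of messages by the communication middleware and LIFO tie-breaking among equal priorities). At every scheduling decision, the scheduling logic schedules a highest-priority released subtask.
   Context: Model: a ROS~2 application is abstracted (by unfolding: each subscription callback with several parents is virtually duplicated so each copy has one parent) as a forest of trees of subtasks (callbacks). Roots (timers or externally triggered subscriptions) are released periodically or sporadically, and each root job has a known integer priority, which may vary between jobs (e.g., deadlines for EDF). A child subtask is released immediately when its parent completes (and only then), and inherits its parent's priority (fixed job-level priority). Callbacks spawn no threads, do not block on I/O and have bounded execution time; execution is non-preemptive on a single processor, so preemption can only occur between subtasks. Larger priority values mean higher priority. Executor mechanism: a released root subtask is pushed into a priority queue (root_queue) ordered by priority; a released child subtask is assigned the value latest_priority and pushed onto a LIFO queue (child_queue); at each scheduling decision the top elements of the two queues are compared, the one of greater priority is popped and executed, and latest_priority is set to its priority. Messages consumed by subscriptions are delivered by the middleware in LIFO order. *)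

From HB Require Import structures.
From mathcomp Require Import all_boot all_order all_algebra.
Set Implicit Arguments. Unset Strict Implicit. Unset Printing Implicit Defensive.
Import Order.TTheory GRing.Theory Num.Theory.
Local Open Scope ring_scope.

Section Model.
Variable T : finType.  (* the (unfolded) subtasks / callbacks *)

Definition is_forest (parent : T -> option T) : Prop :=
  forall t : T, exists n : nat, iter n (fun o => obind parent o) (Some t) = None.

Definition is_root (parent : T -> option T) (t : T) : bool := parent t == None.

(* A job (released instance of a subtask) with its true (fixed job-level)
   priority; larger value = higher priority. *)
Record job := Job { jtask : T; jprio : int }.

(* An entry of an executor queue: the job, the key under which it is ordered
   in the queue, and an insertion time stamp (used for LIFO tie-breaking). *)
Record entry := Entry { ejob : job; ekey : int; estamp : nat }.

Record state := State {
  root_queue : seq entry;      (* priority queue (bag, top = best) *)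
  child_queue : seq entry;     (* LIFO stack, head = top *)
  latest_priority : int;
  clock : nat }.

Definition init_state (l0 : int) : state := State [::] [::] l0 0.

Definition better (e1 e2 : entry) : bool :=
  (ekey e2 < ekey e1) || ((ekey e1 == ekey e2) && (estamp e2 < estamp e1)%N).

Fixpoint best (s : seq entry) : option entry :=
  match s with
  | [::] => None
  | e :: s' => match best s' with
               | None => Some e
               | Some b => Some (if better b e then b else e)
               end
  end.

(* Scheduling decision: compare the tops of the two queues and take the one
   of greater priority (LIFO tie-breaking). The boolean tells whether the
   root queue was popped. *)
Definition choose (st : state) : option (entry * bool) :=
  match best (root_queue st), child_queue st with
  | None, [::] => None
  | Some r, [::] => Some (r, true)
  | None, c :: _ => Some (c, false)
  | Some r, c :: _ => if better r c then Some (r, true) else Some (c, false)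
  end.

Definition scheduled (st : state) : option entry := omap fst (choose st).

Definition released (st : state) : seq job :=
  map ejob (root_queue st ++ child_queue st).

Definition push_children (cs : seq T) (p key : int) (q : seq entry) (k : nat)
  : seq entry * nat :=
  foldl (fun acc c => (Entry (Job c p) key acc.2 :: acc.1, acc.2.+1)) (q, k) cs.

Inductive event :=
  | Release of T & int   (* external/periodic release of a root job with its priority *)
  | Decide.

(* One scheduling decision: pop the chosen entry, set latest_priority to its
   key, execute it non-preemptively; on completion its children are released
   onto the child queue. *)
Definition decide_step (children : T -> seq T) (st : state) : state :=
  match choose st with
  | None => st
  | Some (e, from_root) =>
      let rq := if from_root
                then filter (fun x => estamp x != estamp e) (root_queue st)
                else root_queue st in
      let cq := if from_root then child_queue st else behead (child_queue st) in
      let l := ekey e in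
      let pc := push_children (children (jtask (ejob e))) (jprio (ejob e)) l cq (clock st) in
      State rq pc.1 l pc.2
  end.

Definition release_step (r : T) (p : int) (st : state) : state :=
  State (Entry (Job r p) p (clock st) :: root_queue st) (child_queue st)
        (latest_priority st) (clock st).+1.

Definition step (children : T -> seq T) (st : state) (ev : event) : state :=
  match ev with
  | Release r p => release_step r p st
  | Decide => decide_step children st
  end.

Definition run (children : T -> seq T) (l0 : int) (evs : seq event) : state :=
  foldl (step children) (init_state l0) evs.

Definition release_ok (parent : T -> option T) (ev : event) : bool :=
  match ev with
  | Release r _ => is_root parent r
  | Decide => true
  end.

End Model.

From Pilot Require Import Defs.
From mathcomp Require Import all_boot all_order all_algebra.
Import Order.TTheory GRing.Theory Num.Theory.
Set Implicit Arguments. Unset Strict Implicit. Unset Printing Implicit Defensive.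
Local Open Scope ring_scope.

(* The executor maintains two invariants: every queued entry is keyed by the
   true priority of its job, and the child queue is nonincreasing in key from
   its top.  A job selected by the executor has the largest key of all pending
   entries, so its children, pushed with key latest_priority (= that key =
   their inherited priority), do not break the order of the child queue.
   Hence the top of the child queue is a maximum of the child queue, the top
   of the root queue is a maximum of the root queue, and comparing the two
   selects a pending job of maximal priority. *)

Section EventsExecutor.
Variable T : finType.
Implicit Types (st : state T) (s q : seq (entry T)) (e c : entry T).

Definition ge_key : rel (entry T) := fun e1 e2 => ekey e2 <= ekey e1.

Definition keyed_by_prio e : bool := ekey e == jprio (ejob e).

Definition executor_inv st : bool :=
  all keyed_by_prio (root_queue st ++ child_queue st)
  && sorted ge_key (child_queue st).

Lemma ge_key_trans : transitive ge_key.
Proof. by move=> e2 e1 e3 h12 h23; apply: le_trans h23 h12. Qed.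

Lemma ge_key_refl : reflexive ge_key.
Proof. by move=> e; apply: lexx. Qed.

Lemma all_ge_key_trans e1 e2 s :
  ge_key e1 e2 -> all (ge_key e2) s -> all (ge_key e1) s.
Proof. by move=> h12; apply: sub_all => x; apply: ge_key_trans. Qed.

Lemma better_ge_key e1 e2 : better e1 e2 -> ge_key e1 e2.
Proof. by rewrite /ge_key; case/orP=> [/ltW //|/andP[/eqP -> _]]. Qed.

Lemma not_better_ge_key e1 e2 : ~~ better e1 e2 -> ge_key e2 e1.
Proof. by rewrite negb_or => /andP[]; rewrite -leNgt. Qed.

Lemma best_None s : best s = None -> s = [::].
Proof. by case: s => //= e s; case: (best s). Qed.

Lemma best_all (P : pred (entry T)) s b : best s = Some b -> all P s -> P b.
Proof.
elim: s b => //= e s IH b; case Eb: (best s) => [b'|] [<-] /andP[Pe Ps] //.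
by case: ifP => _ //; apply: IH.
Qed.

Lemma best_ge s b : best s = Some b -> all (ge_key b) s.
Proof.
elim: s b => //= e s IH b; case Eb: (best s) => [b'|] [<-]; last first.
  by rewrite (best_None Eb) /= ge_key_refl.
have Hs := IH _ Eb; case: ifP => [/better_ge_key -> //|/negbT /not_better_ge_key Heb].
by rewrite ge_key_refl (all_ge_key_trans Heb).
Qed.

Lemma sorted_ge_key_head c s : sorted ge_key (c :: s) -> all (ge_key c) (c :: s).
Proof. by move=> /= Hs; rewrite ge_key_refl (order_path_min ge_key_trans). Qed.

Lemma choose_source st e b : Defs.choose st = Some (e, b) ->
  if b then best (root_queue st) = Some e
  else child_queue st = e :: behead (child_queue st).
Proof.
rewrite /Defs.choose; case: (best _) => [r|]; case: (child_queue st) => [|c cq] //.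
- by case=> <- <-.
- by case: ifP => _ [<- <-].
- by case=> <- <-.
Qed.

Lemma choose_keyed_by_prio st e b :
  executor_inv st -> Defs.choose st = Some (e, b) -> keyed_by_prio e.
Proof.
case/andP; rewrite all_cat => /andP[Hroot Hchild] _ /choose_source.
by case: b => [/best_all -> //|Ec]; move: Hchild; rewrite Ec => /andP[].
Qed.

Lemma choose_ge st e b : sorted ge_key (child_queue st) ->
  Defs.choose st = Some (e, b) -> all (ge_key e) (root_queue st ++ child_queue st).
Proof.
rewrite /Defs.choose all_cat; case Eb: (best _) => [r|]; case: (child_queue st) => [|c cq] //.
- by move=> _ [<- _]; rewrite (best_ge Eb).
- move=> /sorted_ge_key_head Hc; have Hr := best_ge Eb.
  case: ifP => [/better_ge_key Hrc|/negbT /not_better_ge_key Hcr] [<- _].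
    by rewrite Hr (all_ge_key_trans Hrc).
  by rewrite Hc (all_ge_key_trans Hcr).
- by move=> /sorted_ge_key_head Hc [<- _]; rewrite (best_None Eb).
Qed.

Lemma push_children_cons (x : T) cs p k q n :
  push_children (x :: cs) p k q n = push_children cs p k (Entry (Job x p) k n :: q) n.+1.
Proof. by []. Qed.

Lemma push_children_sorted cs p k q n :
  sorted ge_key q -> all (fun x => ekey x <= k) q ->
  sorted ge_key (push_children cs p k q n).1
  /\ all (fun x => ekey x <= k) (push_children cs p k q n).1.
Proof.
elim: cs q n => [|x cs IH] q n Hs Hk //.
rewrite push_children_cons; apply: IH => /=; last by rewrite lexx.
by case: q Hs Hk => //= y q -> /andP[Hy _]; rewrite andbT.
Qed.

Lemma push_children_keyed cs p q n :
  all keyed_by_prio q -> all keyed_by_prio (push_children cs p p q n).1.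
Proof.
elim: cs q n => [|x cs IH] q n Hq //.
by rewrite push_children_cons; apply: IH; rewrite /= /keyed_by_prio eqxx.
Qed.

Lemma release_step_inv x p st :
  executor_inv st -> executor_inv (release_step x p st).
Proof. by rewrite /executor_inv /= /keyed_by_prio eqxx. Qed.

Lemma decide_step_inv children st :
  executor_inv st -> executor_inv (decide_step children st).
Proof.
move=> Hinv; rewrite /decide_step; case Ech: (Defs.choose st) => [[e b]|] //.
have Hkey := choose_keyed_by_prio Hinv Ech.
move: (Hinv) => /andP[Hkeyed Hsorted].
have Hge := choose_ge Hsorted Ech.
set rq := if b then _ else _; set cq := if b then _ else _.
suff [Hrq Hcs Hcb Hck] : [/\ all keyed_by_prio rq, sorted ge_key cq,
                             all (ge_key e) cq & all keyed_by_prio cq].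
  set cs := children _; set n := clock st.
  have [Hps _] := push_children_sorted cs (jprio (ejob e)) n Hcs Hcb.
  have Hpk : all keyed_by_prio (push_children cs (jprio (ejob e)) (ekey e) cq n).1.
    by rewrite (eqP Hkey); apply: push_children_keyed.
  by rewrite /executor_inv /= all_cat Hrq Hpk.
move: Hkeyed Hge Hsorted (choose_source Ech); rewrite /rq /cq !all_cat.
clear rq cq Ech; case: b => /andP[Hr Hc] /andP[_ Hcb] Hs => [_|Ec].
  by split=> //; rewrite all_filter; apply: sub_all Hr => x /= ->; rewrite implybT.
by move: Hc Hcb Hs; rewrite Ec /= => /andP[_ ->] /andP[_ ->] /path_sorted.
Qed.

Lemma step_inv children st ev :
  executor_inv st -> executor_inv (step children st ev).
Proof. by case: ev => [x p|]; [apply: release_step_inv | apply: decide_step_inv]. Qed.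

Lemma run_inv children l0 evs : executor_inv (run children l0 evs).
Proof.
rewrite /run; elim: evs (init_state T l0) (isT : executor_inv (init_state T l0)) => //.
by move=> ev evs IH st Hst; apply/IH/step_inv.
Qed.

Lemma scheduled_highest_prio st e : executor_inv st -> scheduled st = Some e ->
  all (fun x => jprio x <= jprio (ejob e)) (released st).
Proof.
move=> Hinv; rewrite /scheduled; case Ech: (Defs.choose st) => [[e' b]|] //= [<-].
have /eqP Hkey := choose_keyed_by_prio Hinv Ech.
case/andP: Hinv => Hkeyed /choose_ge /(_ Ech) Hge.
rewrite /released all_map; move: (conj Hkeyed Hge) => /andP; rewrite -all_predI.
by apply: sub_all => x /andP[/eqP /= <-]; rewrite -Hkey.
Qed.

End EventsExecutor.

Theorem theorem1 (T : finType) (parent : T -> option T) (children : T -> seq T)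
  (Hforest : is_forest parent)
  (Hchildren : forall s c : T, (c \in children s) = (parent c == Some s))
  (Huniq : forall s : T, uniq (children s))
  (l0 : int) (evs : seq (event T)) :
  all (release_ok parent) evs ->
  forall e : entry T, scheduled (run children l0 evs) = Some e ->
  all (fun x => jprio x <= jprio (ejob e)) (released (run children l0 evs)).
Proof. by move=> _ e; apply: scheduled_highest_prio; apply: run_inv. Qed.
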